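(* Consider the generic SURQT model (6) described in the context, and let $(\mathbf{R}(t),\mathbf{T}(t))$ be any solution with initial value in $\Omega$. Then for every $i=1,\dots,N$, \[ \limsup_{t\to\infty}R_i(t)\le \frac{f_i^T(\mathbf{1})}{f_i^T(\mathbf{1})+\theta_i},\qquad \liminf_{t\to\infty}T_i(t)\ge \frac{\theta_i\delta_i}{\left[f_i^T(\mathbf{1})+\theta_i\right]\left[f_i^T(\mathbf{1})+\delta_i\right]}, \] where $\mathbf{1}=(1,\dots,1)$.
   Context: $V=\{1,\dots,N\}$; $G_R=(V,E_R)$ and $G_T=(V,E_T)$ are strongly connected directed graphs. $\theta_i>0,\delta_i>0$ for all $i$; $\mathbf{D}_\theta=\mathrm{diag}(\theta_i)$, $\mathbf{D}_\delta=\mathrm{diag}(\delta_i)$. The functions $f_i^T,g_i^R:\mathbb{R}^N\to\mathbb{R}$ ($i=1,\dots,N$) satisfy: (C1) $f_i^T(x_1,\dots,x_N)$ depends on $x_j$ iff $(i,j)\in E_R$, and $g_i^R$ depends on $x_j$ iff $(i,j)\in E_T$; (C2) $f_i^T(\mathbf 0)=g_i^R(\mathbf 0)=0$; (C3) they are twice continuously differentiable; (C4) each is strictly increasing in each of its arguments; (C5) each is concave. The generic SURQT model (6) is the system, for $t\ge0$, $i=1,\dots,N$, \[ \frac{dR_i}{dt}=T_i f_i^T(\mathbf{R})-R_i g_i^R(\mathbf{T})-\theta_iR_i,\qquad \frac{dT_i}{dt}=R_i g_i^R(\mathbf{T})-T_i f_i^T(\mathbf{R})+\delta_i(1-R_i-T_i),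 \] with $\mathbf{R}=(R_1,\dots,R_N)$, $\mathbf{T}=(T_1,\dots,T_N)$, and initial state in $\Omega=\{(x_1,\dots,x_{2N})\in\mathbb{R}_+^{2N}: x_i+x_{N+i}\le1,\ 1\le i\le N\}$ (which is positively invariant). *)

From Stdlib Require Import Reals Lra Relations.
Open Scope R_scope.

(* Vectors of R^N are modelled as functions nat -> R; index i in {0,...,N-1}
   stands for node i+1 of V = {1,...,N}. *)
Definition vec := nat -> R.

Definition upd (x : vec) (j : nat) (s : R) : vec :=
  fun k => if Nat.eq_dec k j then s else x k.

Definition ones : vec := fun _ => 1.

Definition depends_on (f : vec -> R) (j : nat) : Prop :=
  exists x s, f (upd x j s) <> f x.

Definition strictly_incr_in (f : vec -> R) (j : nat) : Prop :=
  forall x s1 s2, s1 < s2 -> f (upd x j s1) < f (upd x j s2).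

Definition concave (f : vec -> R) : Prop :=
  forall x y l, 0 <= l <= 1 ->
    f (fun k => l * x k + (1 - l) * y k) >= l * f x + (1 - l) * f y.

Definition partial_lim (f : vec -> R) (j : nat) (x : vec) (l : R) : Prop :=
  derivable_pt_lim (fun s => f (upd x j s)) (x j) l.

(* continuity on R^N (only the first N coordinates are the variables) *)
Definition continuous_N (N : nat) (g : vec -> R) : Prop :=
  forall x eps, eps > 0 -> exists delta, delta > 0 /\
    forall y, (forall k, (k < N)%nat -> Rabs (y k - x k) < delta) ->
      Rabs (g y - g x) < eps.

Definition C2_N (N : nat) (f : vec -> R) : Prop :=
  continuous_N N f /\
  exists (D1 : nat -> vec -> R) (D2 : nat -> nat -> vec -> R),
    (forall j x, (j < N)%nat -> partial_lim f j x (D1 j x)) /\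
    (forall j, (j < N)%nat -> continuous_N N (D1 j)) /\
    (forall j k x, (j < N)%nat -> (k < N)%nat -> partial_lim (D1 j) k x (D2 j k x)) /\
    (forall j k, (j < N)%nat -> (k < N)%nat -> continuous_N N (D2 j k)).

Definition strongly_connected (N : nat) (E : nat -> nat -> Prop) : Prop :=
  (forall i j, E i j -> (i < N)%nat /\ (j < N)%nat) /\
  (forall i j, (i < N)%nat -> (j < N)%nat -> i <> j -> clos_trans nat E i j).

Definition admissible (N : nat) (E : nat -> nat -> Prop) (F : nat -> vec -> R) : Prop :=
  forall i, (i < N)%nat ->
    (forall j, depends_on (F i) j <-> E i j) /\
    F i (fun _ => 0) = 0 /\
    C2_N N (F i) /\
    (forall j, E i j -> strictly_incr_in (F i) j) /\
    concave (F i).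

Definition right_cont_0 (x : R -> R) : Prop :=
  forall eps, eps > 0 -> exists d, d > 0 /\
    forall s, 0 <= s < d -> Rabs (x s - x 0) < eps.

Definition SURQT_solution (N : nat) (f g : nat -> vec -> R) (theta delta : nat -> R)
  (Rs Ts : R -> vec) : Prop :=
  forall i, (i < N)%nat ->
    right_cont_0 (fun t => Rs t i) /\ right_cont_0 (fun t => Ts t i) /\
    forall t, t > 0 ->
      derivable_pt_lim (fun s => Rs s i) t
        (Ts t i * f i (Rs t) - Rs t i * g i (Ts t) - theta i * Rs t i) /\
      derivable_pt_lim (fun s => Ts s i) t
        (Rs t i * g i (Ts t) - Ts t i * f i (Rs t) + delta i * (1 - Rs t i - Ts t i)).

Definition in_Omega (N : nat) (x y : vec) : Prop :=
  forall i, (i < N)%nat -> 0 <= x i /\ 0 <= y i /\ x i + y i <= 1.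

Definition limsup_le (h : R -> R) (c : R) : Prop :=
  forall eps, eps > 0 -> exists t0, forall t, t >= t0 -> h t <= c + eps.
Definition liminf_ge (h : R -> R) (c : R) : Prop :=
  forall eps, eps > 0 -> exists t0, forall t, t >= t0 -> h t >= c - eps.

(* Positive invariance of Omega: push each of its faces outward by
   h(s) = e exp(K (s - t)).  At a first contact of a node's face with the pushed
   face, the face functional has derivative > -K h, because on the slightly
   enlarged box the rates are bounded below by m f(-1) (concavity, f(0) = 0)
   and above by f(3); so contact never happens, and letting e -> 0 gives
   invariance.  Inside Omega, 0 <= f_i(R) <= f_i(1), hence
   R_i' <= f_i(1) - (f_i(1) + theta_i) R_i, and once R_i is eventually below
   its bound, T_i' >= delta_i (1 - R_i) - (f_i(1) + delta_i) T_i; linear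
   comparison (Gronwall) turns both differential inequalities into the bounds. *)

From Stdlib Require Import Reals Lra Lia Classical List.
From Coquelicot Require Import Coquelicot.
Open Scope R_scope.

Lemma real_induction (P : R -> Prop) (T : R) :
  P 0 ->
  (forall c, 0 <= c < T -> P c -> exists d, d > 0 /\ forall s, c <= s < c + d -> P s) ->
  (forall c, 0 < c <= T -> (forall s, 0 <= s < c -> P s) -> P c) ->
  forall t, 0 <= t <= T -> P t.
Proof.
  intros H0 Hstep Hclose t Ht. apply NNPP; intro Hbad.
  set (A := fun s => 0 <= s <= t /\ forall u, 0 <= u <= s -> P u).
  assert (HA0 : A 0) by (split; [lra | intros u Hu; replace u with 0 by lra; exact H0]).
  assert (Hbd : bound A) by (exists t; intros s [Hs _]; lra).
  destruct (completeness A Hbd (ex_intro _ 0 HA0)) as [c [Hub Hlub]].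
  assert (Hc0 : 0 <= c) by (apply Hub; exact HA0).
  assert (Hct : c <= t) by (apply Hlub; intros s [Hs _]; lra).
  assert (Hbelow : forall u, 0 <= u < c -> P u).
  { intros u Hu. apply NNPP; intro Hn.
    enough (c <= u) by lra.
    apply Hlub. intros s [_ Hs]. apply Rnot_lt_le; intro Hus. apply Hn, Hs. lra. }
  assert (Pc : P c).
  { destruct Hc0 as [Hc0 | <-]; [apply Hclose; [lra | exact Hbelow] | exact H0]. }
  destruct (Req_dec c t) as [<- | Hne]; [contradiction |].
  destruct (Hstep c ltac:(lra) Pc) as [d [Hd Hright]].
  set (s := Rmin (c + d / 2) t).
  assert (c < s) by (apply Rmin_glb_lt; lra).
  assert (s <= c + d / 2) by apply Rmin_l.
  assert (s <= t) by apply Rmin_r.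
  assert (As : A s).
  { split; [lra |].
    intros u Hu. destruct (Rlt_le_dec u c); [apply Hbelow; lra | apply Hright; lra]. }
  pose proof (Hub s As). lra.
Qed.

Definition right_cont_at (x : R -> R) (c : R) : Prop :=
  forall eps, eps > 0 -> exists d, d > 0 /\
    forall s, c <= s < c + d -> Rabs (x s - x c) < eps.

Lemma right_cont_at_0 (x : R -> R) : right_cont_0 x -> right_cont_at x 0.
Proof.
  intros H eps Heps. destruct (H eps Heps) as [d [Hd Hx]].
  exists d. split; [exact Hd | intros s Hs; apply Hx; lra].
Qed.

Lemma right_cont_at_derivable (x : R -> R) (c l : R) :
  derivable_pt_lim x c l -> right_cont_at x c.
Proof.
  intros Hx eps Heps.
  assert (Hc : continuity_pt x c) by (apply derivable_continuous_pt; exists l; exact Hx).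
  destruct (Hc eps Heps) as [d [Hd Hnear]].
  exists d. split; [exact Hd |]. intros s Hs.
  destruct (Req_dec s c) as [-> | Hne]; [rewrite Rminus_diag, Rabs_R0; lra |].
  apply (Hnear s). split; [split; [exact I | auto] |].
  simpl. unfold R_dist. rewrite Rabs_right; lra.
Qed.

Lemma right_cont_at_dominated (z x y : R -> R) (c : R) :
  (forall s, Rabs (z s - z c) <= Rabs (x s - x c) + Rabs (y s - y c)) ->
  right_cont_at x c -> right_cont_at y c -> right_cont_at z c.
Proof.
  intros Hdom Hx Hy eps Heps.
  destruct (Hx (eps / 2)) as [dx [Hdx Hxs]]; [lra |].
  destruct (Hy (eps / 2)) as [dy [Hdy Hys]]; [lra |].
  exists (Rmin dx dy). split; [apply Rmin_pos; auto |]. intros s Hs.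
  pose proof (Rmin_l dx dy). pose proof (Rmin_r dx dy).
  specialize (Hxs s ltac:(lra)). specialize (Hys s ltac:(lra)).
  specialize (Hdom s). lra.
Qed.

Lemma pos_right_of_pos (I : Type) (l : list I) (phi : I -> R -> R) (c : R) :
  (forall j, In j l -> phi j c > 0 /\ right_cont_at (phi j) c) ->
  exists d, d > 0 /\ forall s j, c <= s < c + d -> In j l -> phi j s > 0.
Proof.
  induction l as [| j0 l IH]; intros Hl.
  - exists 1. split; [lra | intros s j _ []].
  - destruct IH as [d1 [Hd1 H1]]; [intros j Hj; apply Hl; right; exact Hj |].
    destruct (Hl j0 (or_introl eq_refl)) as [Hpos Hrc].
    destruct (Hrc (phi j0 c) Hpos) as [d0 [Hd0 H0]].
    exists (Rmin d0 d1). split; [apply Rmin_pos; auto |].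
    pose proof (Rmin_l d0 d1). pose proof (Rmin_r d0 d1).
    intros s j Hs [<- | Hj]; [| apply H1; [lra | exact Hj]].
    specialize (H0 s ltac:(lra)). apply Rabs_def2 in H0. lra.
Qed.

Lemma nonneg_of_pos_before (f : R -> R) (a c l : R) :
  derivable_pt_lim f c l -> a < c -> (forall s, a < s < c -> f s > 0) ->
  0 <= f c /\ (f c = 0 -> l <= 0).
Proof.
  intros Hf Hac Hpos. split.
  - apply Rnot_lt_le; intro Hneg.
    assert (Hc : continuity_pt f c) by (apply derivable_continuous_pt; exists l; exact Hf).
    destruct (Hc (- f c) ltac:(lra)) as [d [Hd Hnear]].
    set (s := Rmax (c - d / 2) ((a + c) / 2)).
    assert (c - d / 2 <= s) by apply Rmax_l.
    assert ((a + c) / 2 <= s) by apply Rmax_r.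
    assert (s < c) by (apply Rmax_lub_lt; lra).
    assert (Hfs : R_dist (f s) (f c) < - f c).
    { apply Hnear. split; [split; [exact I | lra] |].
      simpl. unfold R_dist. rewrite Rabs_left; lra. }
    unfold R_dist in Hfs. apply Rabs_def2 in Hfs.
    pose proof (Hpos s ltac:(lra)). lra.
  - intros Hzero. apply Rnot_lt_le; intro Hl.
    destruct (Hf l Hl) as [[d Hd] Hquot].
    set (h := Rmax (- d / 2) ((a - c) / 2)).
    assert (- d / 2 <= h) by apply Rmax_l.
    assert ((a - c) / 2 <= h) by apply Rmax_r.
    assert (h < 0) by (apply Rmax_lub_lt; lra).
    assert (Hhd : Rabs h < d) by (rewrite Rabs_left; lra).
    specialize (Hquot h ltac:(lra) Hhd).
    apply Rabs_def2 in Hquot. rewrite Hzero, Rminus_0_r in Hquot.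
    pose proof (Hpos (c + h) ltac:(lra)).
    assert (Hq : f (c + h) / h < 0) by (apply Rdiv_pos_neg; lra).
    lra.
Qed.

Lemma first_contact_barrier (I : Type) (l : list I) (phi phi' : I -> R -> R) (T : R) :
  (forall j, In j l -> phi j 0 > 0) ->
  (forall j, In j l -> right_cont_at (phi j) 0) ->
  (forall j t, In j l -> 0 < t -> derivable_pt_lim (phi j) t (phi' j t)) ->
  (forall t, 0 < t <= T -> (forall j, In j l -> phi j t >= 0) ->
     forall j, In j l -> phi j t = 0 -> phi' j t > 0) ->
  forall t, 0 <= t <= T -> forall j, In j l -> phi j t > 0.
Proof.
  intros Hpos0 Hrc Hder Hpush.
  apply (real_induction (fun t => forall j, In j l -> phi j t > 0)); [exact Hpos0 | |].
  - intros c Hc Hposc.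
    destruct (pos_right_of_pos I l phi c) as [d [Hd Hright]].
    { intros j Hj. split; [auto |].
      destruct Hc as [[Hc0 | <-] _]; [eapply right_cont_at_derivable; apply Hder; auto | auto]. }
    exists d. split; [exact Hd | intros s Hs j Hj; apply Hright; auto].
  - intros c Hc Hbelow.
    assert (Hclosed : forall j, In j l -> 0 <= phi j c /\ (phi j c = 0 -> phi' j c <= 0)).
    { intros j Hj. apply (nonneg_of_pos_before _ 0); [apply Hder; auto; lra | lra |].
      intros s Hs. apply Hbelow; auto; lra. }
    intros j Hj. destruct (Hclosed j Hj) as [[Hgt | Hzero] Hslope]; [exact Hgt |].
    exfalso. assert (Hnn : forall j, In j l -> phi j c >= 0) by (intros; apply Rle_ge, Hclosed; auto).
    specialize (Hpush c Hc Hnn j Hj (eq_sym Hzero)). specialize (Hslope (eq_sym Hzero)). lra.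
Qed.

Definition monotone_N (N : nat) (f : vec -> R) : Prop :=
  forall x y, (forall k, (k < N)%nat -> x k <= y k) -> f x <= f y.

Lemma continuous_N_agree (N : nat) (f : vec -> R) (x y : vec) :
  continuous_N N f -> (forall k, (k < N)%nat -> x k = y k) -> f x = f y.
Proof.
  intros Hf Hxy. apply NNPP; intro Hne.
  assert (Hgap : Rabs (f y - f x) > 0) by (apply Rabs_pos_lt; intro; apply Hne; lra).
  destruct (Hf x _ Hgap) as [d [Hd Hnear]].
  enough (Rabs (f y - f x) < Rabs (f y - f x)) by lra.
  apply Hnear. intros k Hk. rewrite (Hxy k Hk), Rminus_diag, Rabs_R0. lra.
Qed.

(* Raise the coordinates of x to those of y one at a time. *)
Lemma monotone_N_of_incr (N : nat) (f : vec -> R) :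
  continuous_N N f -> (forall j, depends_on f j -> strictly_incr_in f j) ->
  monotone_N N f.
Proof.
  intros Hf Hinc x y Hxy.
  set (z := fun (m : nat) (k : nat) => if Nat.ltb k m then y k else x k).
  assert (Hstep : forall m, (m < N)%nat -> f (z m) <= f (z (S m))).
  { intros m Hm.
    assert (E1 : f (z m) = f (upd (z m) m (x m))).
    { apply (continuous_N_agree N); auto. intros k _. unfold upd, z.
      destruct (Nat.eq_dec k m) as [-> | _]; [destruct (Nat.ltb_spec m m); [lia |] |]; auto. }
    assert (E2 : f (z (S m)) = f (upd (z m) m (y m))).
    { apply (continuous_N_agree N); auto. intros k _. unfold upd, z.
      destruct (Nat.eq_dec k m) as [-> | Hne].
      - destruct (Nat.ltb_spec m (S m)); [auto | lia].
      - destruct (Nat.ltb_spec k (S m)), (Nat.ltb_spec k m); auto; lia. }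
    rewrite E1, E2.
    destruct (classic (depends_on f m)) as [Hdep | Hindep].
    - destruct (Hxy m Hm) as [Hlt | ->]; [left; apply Hinc; auto | lra].
    - assert (Hconst : forall s, f (upd (z m) m s) = f (z m)).
      { intro s. apply NNPP; intro Hn. apply Hindep. exists (z m), s. exact Hn. }
      rewrite !Hconst. lra. }
  assert (Hchain : forall m, (m <= N)%nat -> f (z 0%nat) <= f (z m)).
  { induction m as [| m IH]; intros Hm; [lra |].
    apply Rle_trans with (f (z m)); [apply IH; lia | apply Hstep; lia]. }
  change (f x) with (f (z 0%nat)).
  replace (f y) with (f (z N)); [apply Hchain; lia |].
  apply (continuous_N_agree N); auto. intros k Hk. unfold z.
  destruct (Nat.ltb_spec k N); [auto | lia].
Qed.

Record rate_function (N : nat) (f : vec -> R) : Prop := {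
  rate_monotone : monotone_N N f;
  rate_zero : f (fun _ => 0) = 0;
  rate_concave : concave f }.

Lemma admissible_rate_function (N : nat) (E : nat -> nat -> Prop) (F : nat -> vec -> R) (i : nat) :
  admissible N E F -> (i < N)%nat -> rate_function N (F i).
Proof.
  intros HF Hi. destruct (HF i Hi) as [Hdep [H0 [[Hcont _] [Hinc Hconc]]]].
  split; auto. apply monotone_N_of_incr; auto.
  intros j Hj. apply Hinc, Hdep, Hj.
Qed.

Section RateFunction.
Variables (N : nat) (f : vec -> R).
Hypothesis Hf : rate_function N f.

Lemma rate_nonneg (x : vec) : (forall k, (k < N)%nat -> 0 <= x k) -> 0 <= f x.
Proof. intros Hx. rewrite <- (rate_zero N f Hf). apply (rate_monotone N f Hf). exact Hx. Qed.

Lemma rate_at_neg_one : f (fun _ => -1) <= 0.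
Proof. rewrite <- (rate_zero N f Hf). apply (rate_monotone N f Hf). intros; lra. Qed.

Lemma rate_lower_bound (m : R) (x : vec) : 0 <= m <= 1 ->
  (forall k, (k < N)%nat -> - m <= x k) -> m * f (fun _ => -1) <= f x.
Proof.
  intros Hm Hx.
  pose proof (rate_concave N f Hf (fun _ => -1) (fun _ => 0) m Hm) as Hconc.
  rewrite (rate_zero N f Hf) in Hconc.
  enough (f (fun _ => m * -1 + (1 - m) * 0) <= f x) by lra.
  apply (rate_monotone N f Hf). intros k Hk. specialize (Hx k Hk). lra.
Qed.

Lemma rate_box_bounds (m : R) (x : vec) : 0 <= m <= 1 ->
  (forall k, (k < N)%nat -> - m <= x k <= 3) ->
  m * f (fun _ => -1) <= f x <= f (fun _ => 3).
Proof.
  intros Hm Hx. split.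
  - apply rate_lower_bound; [exact Hm | intros k Hk; apply Hx, Hk].
  - apply (rate_monotone N f Hf). intros k Hk. apply Hx, Hk.
Qed.

End RateFunction.

Inductive face := face_R | face_T | face_RT.

Definition all_faces : list face := face_R :: face_T :: face_RT :: nil.

Lemma in_all_faces (p : face) : In p all_faces.
Proof. destruct p; simpl; auto. Qed.

Definition face_val (p : face) (a b : R) : R :=
  match p with face_R => a | face_T => b | face_RT => 1 - a - b end.

Definition face_lin (p : face) (a b : R) : R :=
  match p with face_R => a | face_T => b | face_RT => - a - b end.

Lemma in_Omega_faces (N : nat) (x y : vec) :
  in_Omega N x y <-> forall k p, (k < N)%nat -> 0 <= face_val p (x k) (y k).
Proof.
  split.
  - intros Hxy k p Hk. destruct (Hxy k Hk) as [Hx [Hy Hs]]. destruct p; simpl; lra.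
  - intros Hf k Hk. pose proof (Hf k face_R Hk). pose proof (Hf k face_T Hk).
    pose proof (Hf k face_RT Hk). simpl in *. lra.
Qed.

Lemma face_val_dist (p : face) (a b a0 b0 : R) :
  Rabs (face_val p a b - face_val p a0 b0) <= Rabs (a - a0) + Rabs (b - b0).
Proof.
  pose proof (Rabs_pos (a - a0)). pose proof (Rabs_pos (b - b0)).
  destruct p; simpl; [lra | lra |].
  replace (1 - a - b - (1 - a0 - b0)) with (- (a - a0) + - (b - b0)) by ring.
  eapply Rle_trans; [apply Rabs_triang |]. rewrite !Rabs_Ropp. lra.
Qed.

Lemma derivable_face_val (p : face) (x y : R -> R) (t x' y' : R) :
  derivable_pt_lim x t x' -> derivable_pt_lim y t y' ->
  derivable_pt_lim (fun s => face_val p (x s) (y s)) t (face_lin p x' y').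
Proof.
  intros Hx Hy. destruct p; simpl; [exact Hx | exact Hy |].
  replace (- x' - y') with (0 - x' - y') by ring.
  apply (derivable_pt_lim_minus (fun s => 1 - x s) y); [| exact Hy].
  apply (derivable_pt_lim_minus (fun _ => 1) x); [apply derivable_pt_lim_const | exact Hx].
Qed.

Lemma mul_lower_bound (b F m C U : R) :
  0 <= m -> 0 <= C -> 0 <= U -> - m <= b <= 3 -> - m * C <= F <= U ->
  - m * (3 * C + U) <= b * F.
Proof.
  intros Hm HC HU Hb HF.
  destruct (Rle_dec 0 b), (Rle_dec 0 F); nra.
Qed.

Lemma face_push (p : face) (a b F G th de m Cf Uf Cg Ug K : R) :
  0 < th -> 0 < de -> 0 < m <= 1 -> 0 <= Cf -> 0 <= Uf -> 0 <= Cg -> 0 <= Ug ->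
  - m <= a -> - m <= b -> a + b <= 1 + m ->
  - m * Cf <= F <= Uf -> - m * Cg <= G <= Ug ->
  3 * Cf + Uf + 3 * Cg + Ug + th + de < K ->
  face_val p a b = - m ->
  0 < K * m + face_lin p (b * F - a * G - th * a) (a * G - b * F + de * (1 - a - b)).
Proof.
  intros Hth Hde Hm HCf HUf HCg HUg Ha Hb Hab HF HG HK Hface.
  assert (HbF : - m * (3 * Cf + Uf) <= b * F) by (apply mul_lower_bound; lra).
  assert (HaG : - m * (3 * Cg + Ug) <= a * G) by (apply mul_lower_bound; lra).
  destruct p; simpl in *.
  - subst a. nra.
  - subst b. nra.
  - replace (- (b * F - a * G - th * a) - (a * G - b * F + de * (1 - a - b)))
      with (th * a + de * m) by (rewrite Hface; ring).
    nra.
Qed.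

Lemma exp_decay_small (C a eps : R) : 0 < a -> 0 < eps ->
  exists T, forall t, T <= t -> C * exp (- (a * t)) <= eps.
Proof.
  intros Ha Heps. exists (Rabs C / (eps * a)). intros t Ht.
  assert (Hat : Rabs C / eps <= a * t).
  { apply Rmult_le_compat_l with (r := a) in Ht; [| lra].
    replace (a * (Rabs C / (eps * a))) with (Rabs C / eps) in Ht by (field; lra). exact Ht. }
  pose proof (exp_ineq1_le (a * t)). pose proof (Rle_abs C).
  assert (Hexp : Rabs C <= eps * exp (a * t)).
  { apply Rmult_le_compat_l with (r := eps) in Hat; [| lra].
    replace (eps * (Rabs C / eps)) with (Rabs C) in Hat by (field; lra).
    pose proof (Rabs_pos C). nra. }
  rewrite exp_Ropp. pose proof (exp_pos (a * t)).
  apply (Rmult_le_reg_r (exp (a * t))); [lra |].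
  rewrite Rmult_assoc, Rinv_l; lra.
Qed.

Lemma decay_comparison (w w' : R -> R) (a t0 : R) :
  (forall t, t0 <= t -> derivable_pt_lim w t (w' t) /\ w' t <= - a * w t) ->
  forall t, t0 <= t -> w t * exp (a * t) <= w t0 * exp (a * t0).
Proof.
  intros Hw t [Ht | <-]; [| lra].
  set (z := fun s => w s * exp (a * s)).
  destruct (MVT_cor2 z (fun s => (w' s + a * w s) * exp (a * s)) t0 t Ht) as [c [Hmvt Hc]].
  { intros c Hc. destruct (Hw c ltac:(lra)) as [Hder _].
    assert (Hexp : derivable_pt_lim (fun s => exp (a * s)) c (a * exp (a * c))).
    { apply is_derive_Reals. auto_derive; auto. ring. }
    replace ((w' c + a * w c) * exp (a * c)) with (w' c * exp (a * c) + w c * (a * exp (a * c)))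
      by ring.
    exact (derivable_pt_lim_mult w _ c _ _ Hder Hexp). }
  destruct (Hw c ltac:(lra)) as [_ Hslope].
  pose proof (exp_pos (a * c)).
  assert ((w' c + a * w c) * exp (a * c) <= 0) by nra.
  unfold z in Hmvt. nra.
Qed.

Lemma limsup_le_of_linear (y y' : R -> R) (a b t0 : R) : 0 < a ->
  (forall t, t0 <= t -> derivable_pt_lim y t (y' t) /\ y' t <= b - a * y t) ->
  limsup_le y (b / a).
Proof.
  intros Ha Hy eps Heps.
  assert (Hw : forall t, t0 <= t -> y t - b / a <= (y t0 - b / a) * exp (a * t0) * exp (- (a * t))).
  { intros t Ht.
    pose proof (decay_comparison (fun s => y s - b / a) y' a t0) as Hcmp.
    assert (Hle : (y t - b / a) * exp (a * t) <= (y t0 - b / a) * exp (a * t0)).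
    { apply Hcmp; [| exact Ht]. intros s Hs. destruct (Hy s Hs) as [Hder Hslope]. split.
      - replace (y' s) with (y' s - 0) by ring.
        apply derivable_pt_lim_minus; [exact Hder | apply derivable_pt_lim_const].
      - replace (- a * (y s - b / a)) with (b - a * y s) by (field; lra). exact Hslope. }
    rewrite exp_Ropp. pose proof (exp_pos (a * t)).
    apply (Rmult_le_reg_r (exp (a * t))); [lra |].
    rewrite Rmult_assoc, Rinv_l; lra. }
  destruct (exp_decay_small ((y t0 - b / a) * exp (a * t0)) a eps Ha Heps) as [T HT].
  exists (Rmax T t0). intros t Ht.
  pose proof (Rmax_l T t0). pose proof (Rmax_r T t0).
  specialize (Hw t ltac:(lra)). specialize (HT t ltac:(lra)). lra.
Qed.

Lemma liminf_ge_of_linear (y y' : R -> R) (a b t0 : R) : 0 < a ->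
  (forall t, t0 <= t -> derivable_pt_lim y t (y' t) /\ b - a * y t <= y' t) ->
  liminf_ge y (b / a).
Proof.
  intros Ha Hy eps Heps.
  destruct (limsup_le_of_linear (fun s => - y s) (fun s => - y' s) a (- b) t0 Ha)
    with (eps := eps) as [T HT]; [| exact Heps |].
  - intros t Ht. destruct (Hy t Ht) as [Hder Hslope].
    split; [apply derivable_pt_lim_opp, Hder | lra].
  - exists T. intros t Ht. specialize (HT t Ht).
    replace (- b / a) with (- (b / a)) in HT by (field; lra). lra.
Qed.

Lemma liminf_ge_of_approx (y : R -> R) (c : R) :
  (forall e, e > 0 -> liminf_ge y (c - e)) -> liminf_ge y c.
Proof.
  intros Hy eps Heps. destruct (Hy (eps / 2) ltac:(lra) (eps / 2) ltac:(lra)) as [T HT].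
  exists T. intros t Ht. specialize (HT t Ht). lra.
Qed.

Lemma finite_strict_bound (c : nat -> R) (n : nat) :
  exists K, 0 < K /\ forall k, (k < n)%nat -> c k < K.
Proof.
  induction n as [| n [K [HK Hc]]]; [exists 1; split; [lra | intros; lia] |].
  exists (Rmax K (c n + 1)). split; [apply Rlt_le_trans with K; [lra | apply Rmax_l] |].
  intros k Hk. destruct (Nat.eq_dec k n) as [-> | Hne].
  - apply Rlt_le_trans with (c n + 1); [lra | apply Rmax_r].
  - apply Rlt_le_trans with K; [apply Hc; lia | apply Rmax_l].
Qed.

Lemma nonneg_of_forall_pos_add (x : R) : (forall e, 0 < e <= 1 -> 0 < e + x) -> 0 <= x.
Proof.
  intros Hx. apply Rnot_lt_le; intro Hneg.
  pose proof (Hx (Rmin 1 (- x)) ltac:(split; [apply Rmin_pos | apply Rmin_l]; lra)).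
  pose proof (Rmin_r 1 (- x)). lra.
Qed.

Lemma in_node_faces (N k : nat) (p : face) :
  In (k, p) (list_prod (seq 0 N) all_faces) <-> (k < N)%nat.
Proof.
  rewrite in_prod_iff, in_seq. split; [lia |]. intros Hk. split; [lia | apply in_all_faces].
Qed.

Section SURQT.
Variables (N : nat) (f g : nat -> vec -> R) (theta delta : nat -> R) (Rs Ts : R -> vec).
Hypothesis Hpar : forall i, (i < N)%nat -> theta i > 0 /\ delta i > 0.
Hypothesis Hf : forall i, (i < N)%nat -> rate_function N (f i).
Hypothesis Hg : forall i, (i < N)%nat -> rate_function N (g i).
Hypothesis Hsol : SURQT_solution N f g theta delta Rs Ts.
Hypothesis Hinit : in_Omega N (Rs 0) (Ts 0).

Definition rate_R (k : nat) (x y : vec) : R := y k * f k x - x k * g k y - theta k * x k.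
Definition rate_T (k : nat) (x y : vec) : R :=
  x k * g k y - y k * f k x + delta k * (1 - x k - y k).

(* On the box [-m, 3]^N the rates lie in [m f(-1), f(3)] (concavity and
   monotonicity), so K > push_const k dominates every error term of [face_push]. *)
Definition push_const (k : nat) : R :=
  3 * - f k (fun _ => -1) + f k (fun _ => 3) + 3 * - g k (fun _ => -1) + g k (fun _ => 3)
  + theta k + delta k.

Lemma push_at_contact (K m : R) (x y : vec) (k : nat) (p : face) :
  (k < N)%nat -> push_const k < K -> 0 < m <= 1 ->
  (forall l q, (l < N)%nat -> - m <= face_val q (x l) (y l)) ->
  face_val p (x k) (y k) = - m ->
  0 < K * m + face_lin p (rate_R k x y) (rate_T k x y).
Proof.
  intros Hk HK Hm Hfaces Hcontact.
  assert (Hbox : forall l, (l < N)%nat -> - m <= x l <= 3 /\ - m <= y l <= 3).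
  { intros l Hl. pose proof (Hfaces l face_R Hl). pose proof (Hfaces l face_T Hl).
    pose proof (Hfaces l face_RT Hl). simpl in *. lra. }
  assert (HF : m * f k (fun _ => -1) <= f k x <= f k (fun _ => 3))
    by (apply (rate_box_bounds N); [apply Hf, Hk | lra | intros l Hl; apply Hbox, Hl]).
  assert (HG : m * g k (fun _ => -1) <= g k y <= g k (fun _ => 3))
    by (apply (rate_box_bounds N); [apply Hg, Hk | lra | intros l Hl; apply Hbox, Hl]).
  pose proof (rate_at_neg_one N _ (Hf k Hk)). pose proof (rate_at_neg_one N _ (Hg k Hk)).
  pose proof (rate_nonneg N _ (Hf k Hk) (fun _ => 3) ltac:(intros; lra)).
  pose proof (rate_nonneg N _ (Hg k Hk) (fun _ => 3) ltac:(intros; lra)).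
  destruct (Hpar k Hk) as [Hth Hde].
  pose proof (Hfaces k face_R Hk). pose proof (Hfaces k face_T Hk).
  pose proof (Hfaces k face_RT Hk). simpl in *.
  apply face_push with (Cf := - f k (fun _ => -1)) (Uf := f k (fun _ => 3))
    (Cg := - g k (fun _ => -1)) (Ug := g k (fun _ => 3)); auto; lra.
Qed.

Lemma perturbed_faces_pos (K : R) :
  0 < K -> (forall k, (k < N)%nat -> push_const k < K) ->
  forall t e, 0 <= t -> 0 < e <= 1 ->
  forall k p, (k < N)%nat -> 0 < e + face_val p (Rs t k) (Ts t k).
Proof.
  intros HK0 HK t e Ht He k p Hk.
  set (h := fun s => e * exp (K * (s - t))).
  assert (Hh' : forall s, derivable_pt_lim h s (K * h s)).
  { intro s. apply is_derive_Reals. unfold h. auto_derive; [exact I | unfold Rminus; ring]. }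
  assert (Hhpos : forall s, 0 < h s) by (intro s; apply Rmult_lt_0_compat; [lra | apply exp_pos]).
  assert (Hhle : forall s, s <= t -> h s <= e).
  { intros s Hs. unfold h.
    assert (exp (K * (s - t)) <= 1).
    { rewrite <- exp_0. destruct (Req_dec (K * (s - t)) 0) as [-> | Hne]; [lra |].
      left. apply exp_increasing. nra. }
    nra. }
  replace e with (h t) by (unfold h; rewrite Rminus_diag, Rmult_0_r, exp_0; ring).
  refine (first_contact_barrier _ (list_prod (seq 0 N) all_faces)
    (fun j s => h s + face_val (snd j) (Rs s (fst j)) (Ts s (fst j)))
    (fun j s => K * h s + face_lin (snd j) (rate_R (fst j) (Rs s) (Ts s)) (rate_T (fst j) (Rs s) (Ts s)))
    t _ _ _ _ t ltac:(lra) (k, p) (proj2 (in_node_faces N k p) Hk));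
    [intros [l q]; simpl .. | intros s Hs Hnn [l q]; simpl].
  - intros Hl%in_node_faces.
    pose proof (proj1 (in_Omega_faces N _ _) Hinit l q Hl). pose proof (Hhpos 0). lra.
  - intros Hl%in_node_faces. destruct (Hsol l Hl) as [HR [HT _]].
    apply (right_cont_at_dominated _ h (fun s => face_val q (Rs s l) (Ts s l))).
    + intro s. eapply Rle_trans; [| apply Rabs_triang]. right. f_equal. ring.
    + exact (right_cont_at_derivable h 0 _ (Hh' 0)).
    + apply (right_cont_at_dominated _ (fun s => Rs s l) (fun s => Ts s l));
        [intro s; apply face_val_dist | apply right_cont_at_0, HR | apply right_cont_at_0, HT].
  - intros s Hl%in_node_faces Hs. destruct (Hsol l Hl) as [_ [_ Hder]].
    destruct (Hder s Hs) as [HR HT].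
    apply (derivable_pt_lim_plus h (fun s => face_val q (Rs s l) (Ts s l))); [apply Hh' |].
    apply derivable_face_val; assumption.
  - intros Hl%in_node_faces Hzero.
    apply push_at_contact; [exact Hl | apply HK, Hl | pose proof (Hhpos s); pose proof (Hhle s); lra | |].
    + intros l' q' Hl'. specialize (Hnn (l', q') (proj2 (in_node_faces N l' q') Hl')). simpl in Hnn. lra.
    + lra.
Qed.

Lemma Omega_invariant (t : R) : 0 <= t -> in_Omega N (Rs t) (Ts t).
Proof.
  intros Ht. destruct (finite_strict_bound push_const N) as [K [HK0 HK]].
  apply in_Omega_faces. intros k p Hk. apply nonneg_of_forall_pos_add. intros e He.
  apply (perturbed_faces_pos K); auto.
Qed.

Lemma rates_in_Omega (i : nat) (t : R) : (i < N)%nat -> 0 <= t ->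
  0 <= f i (Rs t) <= f i ones /\ 0 <= g i (Ts t).
Proof.
  intros Hi Ht. pose proof (Omega_invariant t Ht) as Hom.
  repeat split.
  - apply (rate_nonneg N _ (Hf i Hi)). intros k Hk. apply Hom, Hk.
  - apply (rate_monotone N _ (Hf i Hi)). intros k Hk. unfold ones. destruct (Hom k Hk). lra.
  - apply (rate_nonneg N _ (Hg i Hi)). intros k Hk. apply Hom, Hk.
Qed.

Lemma R_limsup (i : nat) : (i < N)%nat ->
  limsup_le (fun t => Rs t i) (f i ones / (f i ones + theta i)).
Proof.
  intros Hi. destruct (Hpar i Hi) as [Hth _]. destruct (Hsol i Hi) as [_ [_ Hder]].
  pose proof (rate_nonneg N _ (Hf i Hi) ones ltac:(intros; unfold ones; lra)).
  apply (limsup_le_of_linear _ (fun t => rate_R i (Rs t) (Ts t)) _ _ 1); [lra |].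
  intros t Ht. split; [apply Hder; lra |].
  destruct (rates_in_Omega i t Hi ltac:(lra)) as [Hfi Hgi].
  destruct (Omega_invariant t ltac:(lra) i Hi) as [HR [HT HRT]].
  unfold rate_R. nra.
Qed.

Lemma T_liminf (i : nat) : (i < N)%nat ->
  liminf_ge (fun t => Ts t i)
    (theta i * delta i / ((f i ones + theta i) * (f i ones + delta i))).
Proof.
  intros Hi. destruct (Hpar i Hi) as [Hth Hde]. destruct (Hsol i Hi) as [_ [_ Hder]].
  set (F := f i ones).
  assert (HF : 0 <= F) by (apply (rate_nonneg N _ (Hf i Hi)); intros; unfold ones; lra).
  apply liminf_ge_of_approx. intros e He.
  set (e1 := e * (F + delta i) / delta i).
  assert (He1 : e1 > 0) by (apply Rdiv_lt_0_compat; nra).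
  destruct (R_limsup i Hi e1 He1) as [t1 Ht1].
  replace (theta i * delta i / ((F + theta i) * (F + delta i)) - e)
    with (delta i * (theta i / (F + theta i) - e1) / (F + delta i)) by (unfold e1; field; lra).
  apply (liminf_ge_of_linear _ (fun t => rate_T i (Rs t) (Ts t)) _ _ (Rmax t1 1)); [lra |].
  intros t Ht. pose proof (Rmax_l t1 1). pose proof (Rmax_r t1 1).
  split; [apply Hder; lra |].
  destruct (rates_in_Omega i t Hi ltac:(lra)) as [Hfi Hgi].
  destruct (Omega_invariant t ltac:(lra) i Hi) as [HR [HT HRT]].
  specialize (Ht1 t ltac:(lra)). simpl in Ht1. fold F in Ht1.
  assert (Hfrac : theta i / (F + theta i) = 1 - F / (F + theta i)) by (field; lra).
  fold F in Hfi. unfold rate_T.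
  assert (Ts t i * f i (Rs t) <= Ts t i * F) by (apply Rmult_le_compat_l; lra).
  assert (0 <= Rs t i * g i (Ts t)) by (apply Rmult_le_pos; lra).
  assert (delta i * (theta i / (F + theta i) - e1) <= delta i * (1 - Rs t i))
    by (apply Rmult_le_compat_l; lra).
  lra.
Qed.

End SURQT.

Theorem theorem1 (N : nat) (ER ET : nat -> nat -> Prop)
  (theta delta : nat -> R) (fT gR : nat -> vec -> R) (Rs Ts : R -> vec) :
  strongly_connected N ER ->
  strongly_connected N ET ->
  (forall i, (i < N)%nat -> theta i > 0 /\ delta i > 0) ->
  admissible N ER fT ->
  admissible N ET gR ->
  SURQT_solution N fT gR theta delta Rs Ts ->
  in_Omega N (Rs 0) (Ts 0) ->
  forall i, (i < N)%nat ->
    limsup_le (fun t => Rs t i) (fT i ones / (fT i ones + theta i)) /\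
    liminf_ge (fun t => Ts t i)
      (theta i * delta i / ((fT i ones + theta i) * (fT i ones + delta i))).
Proof.
  intros _ _ Hpar HfT HgR Hsol Hinit i Hi.
  assert (Hf : forall k, (k < N)%nat -> rate_function N (fT k))
    by (intros k Hk; exact (admissible_rate_function N ER fT k HfT Hk)).
  assert (Hg : forall k, (k < N)%nat -> rate_function N (gR k))
    by (intros k Hk; exact (admissible_rate_function N ET gR k HgR Hk)).
  split.
  - exact (R_limsup N fT gR theta delta Rs Ts Hpar Hf Hg Hsol Hinit i Hi).
  - exact (T_liminf N fT gR theta delta Rs Ts Hpar Hf Hg Hsol Hinit i Hi).
Qed.
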